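(* Let $i\in\mathbb N$, let $\mathcal T$ be a tree with root $\emptyset$, let $v\succ\emptyset$ in $\mathcal T$ and let $(u_l)_{l=0}^r$ be the branch from $\emptyset$ to $v$. (1) Let $\gamma\in\Gamma$ with tree analysis $(I_t,\varepsilon_t,\eta_t)_{t\in\mathcal T}$, and let $y\in\mathscr B_{mT}$ be a normalised finitely supported vector such that (a) $v$ is the covering index for $y$, (b) $|d^*_\xi(y)|<4^{-i-3}$ for all $\xi\in\Gamma$, and (c) $|e^*_\gamma(y)|>4^{-i-1}$. Then $r\le i+1$. (2) Let $f\in W$ with tree analysis $(f_t)_{t\in\mathcal T}$, let $z=e_l\in T$ for some $l\in\mathbb N$, and assume (a) $f_v=e^*_l$ and (b) $f(z)>4^{-i-1}$. Then $r\le i$.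
   Context: Fix sequences $(m_j)$, $(n_j)$ of natural numbers with $m_1=n_1=4$, $m_{j+1}\ge m_j^2$, $n_{j+1}\ge m_{j+1}^2(4n_j)^{\log_2 m_{j+1}}$. Mixed Tsirelson space $T$: $W\subset c_{00}$ is the smallest set containing $\pm e^*_k$ ($k\in\mathbb N$) such that if $j\in\mathbb N$, $d\le n_j$ and $f_1<\dots<f_d\in W$ then $m_j^{-1}\sum f_i\in W$; $T$ is the completion of $c_{00}$ under $\sup_{f\in W}f(x)$, with unit vector basis $(e_n)$. A tree analysis of $f\in W$ is a family $(f_t)_{t\in\mathcal T}$ indexed by a finite tree with root $\emptyset$ such that $f_\emptyset=f$, $f_t=\pm e^*_k$ for terminal $t$, and for non-terminal $t$, $f_t=m_j^{-1}\sum_{s\in S_t}f_s$ for some $j$ with $(f_s)_{s\in S_t}$ a block sequence in $W$ of length at most $n_j$ ($S_t$ = immediate successors of $t$). The space $\mathscr B_{mT}$: $\Delta_1=\{1\}$; given $\Delta_1,\dots,\Delta_q$, with $\Gamma_0=\emptyset$, $\Gamma_p=\bigcup_{r\le p}\Delta_r$, $\Delta_{q+1}$ consists of the tuples $(q+1,0,m_j,\varepsilon e^*_\eta)$ with $j\le q+1$, $\varepsilon=\pm1$, $\eta\in\Gamma_q$, and the tuples $(q+1,\xi,m_j,\varepsilon e^*_\eta)$ with $1\le p<q$, $j\le p$, $\xi\in\Delta_p$, $w(\xi)=m_j^{-1}$, $\mathrm{age}(\xi)<n_j$, $\varepsilon=\pm1$, $\eta\in\Gamma_q\setminus\Gamma_p$;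 weight $w=m_j^{-1}$, rank $q+1$, age $1$ resp. $\mathrm{age}(\xi)+1$. $\Gamma=\bigcup\Delta_q$. In $\ell_1(\Gamma)$, $d^*_\gamma=e^*_\gamma-c^*_\gamma$ with $c^*_\gamma=m_j^{-1}\varepsilon P^*_{(0,q]}e^*_\eta$ for $\gamma=(q+1,0,m_j,\varepsilon e^*_\eta)$ and $c^*_\gamma=e^*_\xi+m_j^{-1}\varepsilon P^*_{(p,q]}e^*_\eta$ for $\gamma=(q+1,\xi,m_j,\varepsilon e^*_\eta)$, $\xi\in\Delta_p$ ($P^*_{(p,q]}$ the basis projection onto $\mathrm{span}\{d^*_\delta:\mathrm{rank}\,\delta\in(p,q]\}$). $(d^*_\gamma)$ is a basis of $\ell_1(\Gamma)$, $(d_\gamma)\subset\ell_\infty(\Gamma)$ is biorthogonal, $\mathscr B_{mT}=\overline{\mathrm{span}}\{d_\gamma\}$, and $e^*_\gamma(x)=x(\gamma)$. For an interval $I$, $P_I$ is the projection of $\mathscr B_{mT}$ onto $\overline{\mathrm{span}}\{d_\delta:\mathrm{rank}\,\delta\in I\}$ along the other $d_\delta$, and $e^*_\eta P_I=P^*_Ie^*_\eta$. $\mathrm{rng}$ of a finitely supported vector (resp. of a functional in $\mathrm{span}\{d^*_\delta\}$) is the smallest interval $[p,q]$ of ranks such that it lies in the span of the $d_\delta$ (resp. $d^*_\delta$) with rank in $[p,q]$. Evaluation analysis: for $\gamma\in\Gamma$ with $w(\gamma)=m_j^{-1}$ there are unique $a\le n_j$ and $(\xi_k,\varepsilon_k,\eta_k)_{k=1}^a$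 with $\xi_a=\gamma$, $\xi_1=(q_1+1,0,m_j,\varepsilon_1e^*_{\eta_1})$, $\xi_k=(q_k+1,\xi_{k-1},m_j,\varepsilon_ke^*_{\eta_k})$ for $k>1$; set $I_1=[1,q_1]$, $I_k=[q_{k-1}+2,q_k]$. Then $e^*_\gamma=\sum_k d^*_{\xi_k}+m_j^{-1}\sum_k\varepsilon_kP^*_{I_k}e^*_{\eta_k}$. For an interval $I$, $e^*_\gamma$ is $I$-decomposable if $A_I=\{k:P^*_{I_k\cap I}e^*_{\eta_k}\neq0\}\neq\emptyset$, and then its $I$-analysis is $(I_k\cap I,\varepsilon_k,\eta_k)_{k\in A_I}$. Tree analysis of $e^*_\gamma$: the family $(I_t,\varepsilon_t,\eta_t)_{t\in\mathcal T}$ over a finite tree of finite sequences with root $\emptyset$, defined by $\eta_\emptyset=\gamma$, $I_\emptyset=(0,\mathrm{rank}\,\gamma)$, $\varepsilon_\emptyset=1$, $S_\emptyset=\{(1),\dots,(a)\}$ with $(I_{(k)},\varepsilon_{(k)},\eta_{(k)})=(I_k,\varepsilon_k,\eta_k)$ from the evaluation analysis; inductively, if $e^*_{\eta_t}$ is $I_t$-decomposable with $I_t$-analysis $(I'_k,\varepsilon'_k,\eta'_k)_{k\in A}$, then $S_t=\{t^\frown k:k\in A\}$ with $(I_{t^\frown k},\varepsilon_{t^\frown k},\eta_{t^\frown k})=(I'_k,\varepsilon'_k,\eta'_k)$; otherwise $t$ is terminal. For a finitely supported $y$, the covering index for $y$ is the maximal $t\in\mathcal T$ with $\mathrm{rng}\,y\cap\mathrm{rng}\,e^*_\gamma\subseteq\mathrm{rng}(e^*_{\eta_t}P_{I_t})$.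 A branch of length $r$ from $u$ to $v$ in a tree is a sequence $(u_l)_{l=0}^r$ with $u_0=u$, $u_{l+1}$ an immediate successor of $u_l$, $u_r=v$. *)

From Stdlib Require Import Reals List Arith Lia.
Import ListNotations.
Open Scope R_scope.

Definition good_seqs (m n : nat -> nat) : Prop :=
  m 1%nat = 4%nat /\ n 1%nat = 4%nat /\
  (forall j, (1 <= j)%nat -> (m j ^ 2 <= m (S j))%nat) /\
  (forall j, (1 <= j)%nat ->
     INR (m (S j)) ^ 2 * Rpower (4 * INR (n j)) (ln (INR (m (S j))) / ln 2)
       <= INR (n (S j))).

Definition sgn (e : bool) : R := if e then 1 else -1.

Definition estar (k : nat) : nat -> R := fun x => if Nat.eqb x k then 1 else 0.

Definition blocks (f g : nat -> R) : Prop :=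
  forall x y, f x <> 0 -> g y <> 0 -> (x < y)%nat.

Definition block_seq (fs : list (nat -> R)) : Prop :=
  forall i1 i2, (i1 < i2 < length fs)%nat ->
    blocks (nth i1 fs (fun _ => 0)) (nth i2 fs (fun _ => 0)).

Definition sumf (fs : list (nat -> R)) : nat -> R :=
  fun x => fold_right (fun f acc => f x + acc) 0 fs.

Inductive inW (m n : nat -> nat) : (nat -> R) -> Prop :=
| inW_e : forall (k : nat) (e : bool), inW m n (fun x => sgn e * estar k x)
| inW_avg : forall (j : nat) (fs : list (nat -> R)),
    (1 <= j)%nat -> (1 <= length fs <= n j)%nat ->
    Forall (inW m n) fs -> block_seq fs ->
    inW m n (fun x => / INR (m j) * sumf fs x).

Definition is_tree (Tn : list nat -> Prop) : Prop :=
  Tn nil /\ (forall t k, Tn (t ++ [k]) -> Tn t) /\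
  exists L : list (list nat), forall t, Tn t -> In t L.

Definition branch (Tn : list nat -> Prop) (u : nat -> list nat) (r : nat)
  (v : list nat) : Prop :=
  u 0%nat = nil /\ u r = v /\
  forall l, (l < r)%nat -> Tn (u (S l)) /\ exists k, u (S l) = u l ++ [k].

Definition W_tree_analysis (m n : nat -> nat) (f : nat -> R)
  (Tn : list nat -> Prop) (ft : list nat -> nat -> R) : Prop :=
  is_tree Tn /\
  (forall x, ft nil x = f x) /\
  (forall t, Tn t -> (forall k, ~ Tn (t ++ [k])) ->
     exists k e, forall x, ft t x = sgn e * estar k x) /\
  (forall t, Tn t -> (exists k, Tn (t ++ [k])) ->
     exists (j : nat) (S : list (list nat)),
       (1 <= j)%nat /\ NoDup S /\
       (forall s, In s S <-> exists k, s = t ++ [k] /\ Tn s) /\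
       (length S <= n j)%nat /\
       Forall (fun s => inW m n (ft s)) S /\
       block_seq (map ft S) /\
       (forall x, ft t x = / INR (m j) * sumf (map ft S) x)).

(* Codes for elements of Gamma:
   G1                 = the element 1 of Delta_1,
   G0 r j e eta       = (r, 0, m_j, sgn e e*_eta)        (r = q+1),
   GS r xi j e eta    = (r, xi, m_j, sgn e e*_eta).          *)
Inductive gam : Type :=
| G1 : gam
| G0 : nat -> nat -> bool -> gam -> gam
| GS : nat -> gam -> nat -> bool -> gam -> gam.

Definition gam_eq_dec : forall x y : gam, {x = y} + {x <> y}.
Proof. decide equality; try apply Bool.bool_dec; try apply Nat.eq_dec. Defined.

Definition rank (g : gam) : nat :=
  match g with G1 => 1%nat | G0 r _ _ _ => r | GS r _ _ _ _ => r end.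

(* weight index: w(g) = 1/m_(wj g) (undefined for G1, coded 0) *)
Definition wj (g : gam) : nat :=
  match g with G1 => 0%nat | G0 _ j _ _ => j | GS _ _ j _ _ => j end.

Fixpoint age (g : gam) : nat :=
  match g with G1 => 0%nat | G0 _ _ _ _ => 1%nat | GS _ xi _ _ _ => S (age xi) end.

Fixpoint valid (n : nat -> nat) (g : gam) : Prop :=
  match g with
  | G1 => True
  | G0 r j _ eta =>
      valid n eta /\ (2 <= r)%nat /\ (1 <= j <= r)%nat /\ (rank eta <= r - 1)%nat
  | GS r xi j _ eta =>
      valid n xi /\ valid n eta /\
      (1 <= rank xi)%nat /\ (rank xi < r - 1)%nat /\
      (1 <= j <= rank xi)%nat /\ wj xi = j /\ (age xi < n j)%nat /\
      (rank xi < rank eta <= r - 1)%nat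
  end.

(* restriction of coefficients (w.r.t. the basis (d_delta)) to ranks in [lo,hi] *)
Definition restr (lo hi : nat) (a : gam -> R) : gam -> R :=
  fun d => if andb (Nat.leb lo (rank d)) (Nat.leb (rank d) hi) then a d else 0.

(* ev m g a = e*_g ( sum_delta a_delta d_delta ):
   e*_g = d*_g + c*_g, with c*_g as in the definition and
   P*_I e*_eta (x) = e*_eta (P_I x). *)
Fixpoint ev (m : nat -> nat) (g : gam) (a : gam -> R) : R :=
  match g with
  | G1 => a G1
  | G0 r j e eta =>
      a g + / INR (m j) * sgn e * ev m eta (restr 1 (r - 1) a)
  | GS r xi j e eta =>
      a g + ev m xi a + / INR (m j) * sgn e * ev m eta (restr (S (rank xi)) (r - 1) a)
  end.

Definition dcoef (m : nat -> nat) (eta delta : gam) : R :=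
  ev m eta (fun d => if gam_eq_dec d delta then 1 else 0).

Definition itv : Type := (nat * nat)%type.
Definition in_itv (I : itv) (k : nat) : Prop := (fst I <= k <= snd I)%nat.
Definition inter (I J : itv) : itv := (Nat.max (fst I) (fst J), Nat.min (snd I) (snd J)).

Definition hull (S : nat -> Prop) : nat -> Prop :=
  fun k => exists k1 k2, S k1 /\ S k2 /\ (k1 <= k <= k2)%nat.

Definition rng_vec (n : nat -> nat) (a : gam -> R) : nat -> Prop :=
  hull (fun k => exists d, valid n d /\ a d <> 0 /\ rank d = k).

Definition rng_fun (m n : nat -> nat) (eta : gam) (I : itv) : nat -> Prop :=
  hull (fun k => exists d, valid n d /\ in_itv I (rank d) /\
                           dcoef m eta d <> 0 /\ rank d = k).

Definition rng_estar (m n : nat -> nat) (g : gam) : nat -> Prop :=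
  hull (fun k => exists d, valid n d /\ dcoef m g d <> 0 /\ rank d = k).

Definition Pnz (m n : nat -> nat) (eta : gam) (I : itv) : Prop :=
  exists d, valid n d /\ in_itv I (rank d) /\ dcoef m eta d <> 0.

Fixpoint eanal (g : gam) : list (itv * bool * gam) :=
  match g with
  | G1 => nil
  | G0 r _ e eta => [((1%nat, (r - 1)%nat), e, eta)]
  | GS r xi _ e eta => eanal xi ++ [((S (rank xi), (r - 1)%nat), e, eta)]
  end.

Inductive tnode (m n : nat -> nat) (g : gam) : list nat -> itv * bool * gam -> Prop :=
| tn_root : tnode m n g nil ((1%nat, (rank g - 1)%nat), true, g)
| tn_top : forall k Ik ek etak,
    nth_error (eanal g) k = Some (Ik, ek, etak) ->
    tnode m n g [S k] (Ik, ek, etak)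
| tn_step : forall t I e eta k Ik ek etak,
    t <> nil -> tnode m n g t (I, e, eta) ->
    nth_error (eanal eta) k = Some (Ik, ek, etak) ->
    Pnz m n etak (inter Ik I) ->
    tnode m n g (t ++ [S k]) (inter Ik I, ek, etak).

Definition tree_of (m n : nat -> nat) (g : gam) : list nat -> Prop :=
  fun t => exists lbl, tnode m n g t lbl.

Definition covers (m n : nat -> nat) (g : gam) (a : gam -> R) (t : list nat) : Prop :=
  exists I e eta, tnode m n g t (I, e, eta) /\
    forall k, rng_vec n a k -> rng_estar m n g k -> rng_fun m n eta I k.

Definition prefix (v t : list nat) : Prop := exists w, t = v ++ w.

Definition covering_index (m n : nat -> nat) (g : gam) (a : gam -> R) (v : list nat) : Prop :=
  covers m n g a v /\ forall t, covers m n g a t -> prefix v t -> t = v.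

Definition fin_supp (n : nat -> nat) (a : gam -> R) : Prop :=
  (forall d, a d <> 0 -> valid n d) /\
  exists L : list gam, forall d, a d <> 0 -> In d L.

Definition normalised (m n : nat -> nat) (a : gam -> R) : Prop :=
  (forall eta, valid n eta -> Rabs (ev m eta a) <= 1) /\
  (forall eps, 0 < eps -> exists eta, valid n eta /\ 1 - eps < Rabs (ev m eta a)).

From Stdlib Require Import Reals List Lra Lia FunctionalExtensionality.
Import ListNotations.
Open Scope R_scope.

(* Every step down a tree analysis multiplies by a weight 1/m_j <= 1/4.

   (2) The successors of a node of the analysis of f form a block sequence, so at the
   coordinate l at most one of them is nonzero; hence f(e_l) is f_v(e_l) = 1 times the
   product of the r weights along the branch, at most 4^-r.

   (1) By the covering property, e*_gamma(y) = e*_gamma(P_{I_v} y).  Since P_{I_v} y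
   lives on ranks in I_v, which is contained in I_t for every t <> root on the branch,
   the evaluation analysis gives e*_{eta_t}(P_{I_v} y) = m_j^-1 eps e*_{eta_t'}(P_{I_v} y)
   for each edge t -> t'.  So |e*_gamma(y)| <= 4^-r |e*_{eta_v}(P_{I_v} y)| <= 4^-r * 4,
   where |e*_eta P_I y| <= 4 ||y|| is the usual bound on the projections, obtained by
   induction on eta from m_j >= 4 alone. *)

Ltac restr_cases :=
  unfold restr; cbn [rank] in *;
  repeat match goal with |- context [Nat.leb ?x ?y] => destruct (Nat.leb_spec x y) end;
  simpl; try lra; try (exfalso; lia).

Lemma good_seqs_m_ge4 m n : good_seqs m n -> forall j, (1 <= j)%nat -> 4 <= INR (m j).
Proof.
  intros [Hm1 [_ [Hsq _]]] j Hj.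
  assert (H : (4 <= m j)%nat).
  { induction j as [|j IH]; [lia|]. destruct j as [|j]; [lia|].
    specialize (IH ltac:(lia)). specialize (Hsq (S j) ltac:(lia)).
    rewrite Nat.pow_2_r in Hsq. nia. }
  apply le_INR in H. simpl in H. lra.
Qed.

Lemma Rabs_sgn e : Rabs (sgn e) = 1.
Proof. destruct e; unfold sgn; [apply Rabs_R1|]. rewrite Rabs_left; lra. Qed.

Lemma Rabs_weight_le M e x : 4 <= M -> Rabs (/ M * sgn e * x) <= / 4 * Rabs x.
Proof.
  intros HM. rewrite !Rabs_mult, Rabs_sgn, Rmult_1_r, Rabs_inv, Rabs_right by lra.
  apply Rmult_le_compat_r; [apply Rabs_pos | apply Rinv_le_contravar; lra].
Qed.

Lemma Rabs_sub_le x y : Rabs (x - y) <= Rabs x + Rabs y.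
Proof. unfold Rminus. rewrite <- (Rabs_Ropp y). apply Rabs_triang. Qed.

Lemma pow_inv4_lt k r c : / 4 ^ k < (/ 4) ^ r * 4 ^ c -> (r < k + c)%nat.
Proof.
  intros H. destruct (Nat.lt_ge_cases r (k + c)) as [Hr|Hr]; [exact Hr|].
  exfalso. replace r with (k + (r - (k + c)) + c)%nat in H by lia.
  rewrite !pow_add, <- pow_inv, Rmult_assoc, <- Rpow_mult_distr, Rinv_l, pow1, Rmult_1_r in H
    by lra.
  assert (Hd : (/ 4) ^ (r - (k + c)) <= 1).
  { rewrite <- (pow1 (r - (k + c))). apply pow_incr; lra. }
  assert (Hk : 0 < (/ 4) ^ k) by (apply pow_lt; lra).
  nra.
Qed.

Lemma nat_down_ind (P : nat -> Prop) r :
  P r -> (forall l, (l < r)%nat -> P (S l) -> P l) -> forall l, (l <= r)%nat -> P l.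
Proof.
  intros Hr Hstep l Hl. remember (r - l)%nat as d eqn:Hd. revert l Hl Hd.
  induction d as [|d IH]; intros l Hl Hd.
  - replace l with r by lia. exact Hr.
  - apply Hstep; [lia|]. apply IH; lia.
Qed.

Lemma eq0_outside_supp {A} (b : A -> R) (P : A -> Prop) d :
  (forall d, b d <> 0 -> P d) -> ~ P d -> b d = 0.
Proof. intros H NP. destruct (Req_dec (b d) 0); [assumption | exfalso; auto]. Qed.

Lemma hull_self (P : nat -> Prop) k : P k -> hull P k.
Proof. intros HP. exists k, k. repeat split; [exact HP | exact HP | lia | lia]. Qed.

Lemma restr_add lo hi (f h : gam -> R) :
  restr lo hi (fun x => f x + h x) = fun x => restr lo hi f x + restr lo hi h x.
Proof. extensionality x. restr_cases. Qed.

Lemma restr_sub lo hi (f h : gam -> R) :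
  restr lo hi (fun x => f x - h x) = fun x => restr lo hi f x - restr lo hi h x.
Proof. extensionality x. restr_cases. Qed.

Lemma restr_scale lo hi s (f : gam -> R) :
  restr lo hi (fun x => s * f x) = fun x => s * restr lo hi f x.
Proof. extensionality x. restr_cases. Qed.

Lemma restr_0 lo hi : restr lo hi (fun _ : gam => 0) = fun _ => 0.
Proof. extensionality x. restr_cases. Qed.

Lemma restr_ext lo hi (b b' : gam -> R) :
  (forall d, (lo <= rank d <= hi)%nat -> b d = b' d) -> restr lo hi b = restr lo hi b'.
Proof. intros H. extensionality d. restr_cases; apply H; lia. Qed.

Lemma restr_id lo hi (b : gam -> R) :
  (forall d, b d <> 0 -> (lo <= rank d <= hi)%nat) -> restr lo hi b = b.
Proof.
  intros H. extensionality d. destruct (Req_dec (b d) 0) as [E|E].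
  - unfold restr. rewrite E. destruct (andb _ _); reflexivity.
  - specialize (H d E). restr_cases.
Qed.

Lemma restr_eq0 lo hi (b : gam -> R) :
  (forall d, b d <> 0 -> ~ (lo <= rank d <= hi)%nat) -> restr lo hi b = fun _ => 0.
Proof.
  intros H. extensionality d. destruct (Req_dec (b d) 0) as [E|E].
  - unfold restr. rewrite E. destruct (andb _ _); reflexivity.
  - specialize (H d E). restr_cases.
Qed.

Lemma restr_supp lo hi (b : gam -> R) d : restr lo hi b d <> 0 -> (lo <= rank d <= hi)%nat.
Proof.
  unfold restr. destruct (Nat.leb_spec lo (rank d)), (Nat.leb_spec (rank d) hi); simpl;
    intros Hd; lia || (exfalso; apply Hd; reflexivity).
Qed.

Lemma eanal_spec n g : valid n g -> forall I e eta, In (I, e, eta) (eanal g) ->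
  valid n eta /\ (1 <= fst I)%nat /\ (snd I < rank g)%nat /\ (1 <= wj g)%nat.
Proof.
  induction g as [|r j e0 eta0 _|r xi IHxi j e0 eta0 _]; intros Hv I e eta Hin; simpl in *.
  - contradiction.
  - destruct Hin as [Hin|[]]. injection Hin as <- <- <-. simpl. intuition lia.
  - destruct Hv as (Hx & Heta & _ & Hxr & Hj & _).
    apply in_app_or in Hin. destruct Hin as [Hin|[Hin|[]]].
    + destruct (IHxi Hx _ _ _ Hin) as (? & ? & ? & _). intuition lia.
    + injection Hin as <- <- <-. simpl. intuition lia.
Qed.

Section Evaluation.

Variables m n : nat -> nat.

Lemma ev_0 g : ev m g (fun _ => 0) = 0.
Proof. induction g; simpl; rewrite ?restr_0, ?IHg1, ?IHg2, ?IHg; ring. Qed.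

Lemma ev_add g : forall f h, ev m g (fun x => f x + h x) = ev m g f + ev m g h.
Proof. induction g; intros; simpl; rewrite ?restr_add, ?IHg1, ?IHg2, ?IHg; ring. Qed.

Lemma ev_sub g : forall f h, ev m g (fun x => f x - h x) = ev m g f - ev m g h.
Proof. induction g; intros; simpl; rewrite ?restr_sub, ?IHg1, ?IHg2, ?IHg; ring. Qed.

Lemma ev_scale g : forall s f, ev m g (fun x => s * f x) = s * ev m g f.
Proof. induction g; intros; simpl; rewrite ?restr_scale, ?IHg1, ?IHg2, ?IHg; ring. Qed.

Lemma ev_eq0_of_dcoef_eq0 g L c : (forall d, c d <> 0 -> In d L) ->
  (forall d, c d <> 0 -> dcoef m g d = 0) -> ev m g c = 0.
Proof.
  revert c. induction L as [|d0 L IH]; intros c HL Hd.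
  - replace c with (fun _ : gam => 0)
      by (extensionality x; symmetry; apply (eq0_outside_supp c _ x HL); auto).
    apply ev_0.
  - set (c' := fun x => if gam_eq_dec x d0 then 0 else c x).
    replace c with (fun x => c d0 * (if gam_eq_dec x d0 then 1 else 0) + c' x)
      by (extensionality x; unfold c'; destruct (gam_eq_dec x d0); subst; ring).
    rewrite ev_add, ev_scale. fold (dcoef m g d0).
    rewrite IH.
    + destruct (Req_dec (c d0) 0) as [E|E]; [rewrite E | rewrite (Hd d0 E)]; ring.
    + intros d. unfold c'. destruct (gam_eq_dec d d0); [tauto|]. intros H.
      destruct (HL d H); [congruence | assumption].
    + intros d. unfold c'. destruct (gam_eq_dec d d0); [tauto | apply Hd].
Qed.

Lemma ev_ext g : valid n g -> forall b b' : gam -> R,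
  (forall d, (1 <= rank d <= rank g)%nat -> b d = b' d) -> ev m g b = ev m g b'.
Proof.
  induction g as [|r j e eta IH|r xi IHxi j e eta IHeta]; intros Hv b b' H; simpl in *.
  - apply H. simpl. lia.
  - destruct Hv as [_ [Hr [_ _]]].
    rewrite (H (G0 r j e eta)) by (simpl; lia).
    rewrite (restr_ext 1 (r - 1) b b') by (intros; apply H; lia).
    reflexivity.
  - destruct Hv as [Hx [_ [_ [Hxr _]]]].
    rewrite (H (GS r xi j e eta)) by (simpl; lia).
    rewrite (IHxi Hx b b') by (intros; apply H; lia).
    rewrite (restr_ext (S (rank xi)) (r - 1) b b') by (intros; apply H; lia).
    reflexivity.
Qed.

(* Every other term of the evaluation analysis of [e*_eta] vanishes on [b]. *)
Lemma ev_eanal_step eta k I e' eta' (b : gam -> R) : valid n eta ->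
  nth_error (eanal eta) k = Some (I, e', eta') ->
  (forall d, b d <> 0 -> in_itv I (rank d)) ->
  ev m eta b = / INR (m (wj eta)) * sgn e' * ev m eta' b.
Proof.
  unfold in_itv. revert k I e' eta' b.
  induction eta as [|r j e0 eta0 _|r xi IHxi j e0 eta0 _];
    intros k I e' eta' b Hv Hk Hb; simpl in *.
  - destruct k; discriminate.
  - destruct Hv as [_ [Hr [Hj Hre]]].
    destruct k as [|[|k]]; try discriminate. injection Hk as <- <- <-. simpl in Hb.
    rewrite (eq0_outside_supp b _ (G0 r j e0 eta0) Hb) by (simpl; lia).
    rewrite restr_id by exact Hb. ring.
  - destruct Hv as [Hx [_ [_ [Hxr [_ [Hwj _]]]]]].
    destruct (Nat.lt_ge_cases k (length (eanal xi))) as [L|L].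
    + rewrite nth_error_app1 in Hk by exact L.
      destruct (eanal_spec n xi Hx I e' eta') as [_ [_ [HIxi _]]]; [eapply nth_error_In; eauto|].
      rewrite (IHxi k I e' eta' b Hx Hk Hb), Hwj.
      rewrite (eq0_outside_supp b _ (GS r xi j e0 eta0) Hb) by (simpl; lia).
      rewrite restr_eq0 by (intros d Hd; specialize (Hb d Hd); lia).
      rewrite ev_0. ring.
    + rewrite nth_error_app2 in Hk by exact L.
      destruct (k - length (eanal xi))%nat as [|[|k']]; try discriminate.
      injection Hk as <- <- <-. simpl in Hb.
      rewrite (eq0_outside_supp b _ (GS r xi j e0 eta0) Hb) by (simpl; lia).
      rewrite (ev_ext xi Hx b (fun _ => 0))
        by (intros d Hd; apply (eq0_outside_supp b _ d Hb); lia).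
      rewrite ev_0, restr_id by exact Hb. ring.
Qed.

Variables (a : gam -> R) (C : R).
Hypothesis m_ge4 : forall j, (1 <= j)%nat -> 4 <= INR (m j).
Hypothesis ev_a_le : forall z, valid n z -> Rabs (ev m z a) <= C.

Lemma bound_nonneg : 0 <= C.
Proof. apply (Rle_trans _ _ _ (Rabs_pos _) (ev_a_le G1 I)). Qed.

(* In the [GS] case with [rank xi <= N], [P_(rank xi, N]] is the difference of two
   initial projections, each bounded by [2 C], and the weight [1/m_j <= 1/4] damps it. *)
Lemma ev_restr_upto_le g : valid n g -> forall N, Rabs (ev m g (restr 1 N a)) <= 2 * C.
Proof.
  pose proof bound_nonneg as HC.
  induction g as [|r j e eta IH|r xi IHxi j e eta IHeta]; intros Hv N.
  - destruct (Nat.leb_spec 1 N).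
    + rewrite (ev_ext G1 I (restr 1 N a) a) by (intros; restr_cases).
      specialize (ev_a_le G1 I). lra.
    + simpl. replace (restr 1 N a G1) with 0 by restr_cases. rewrite Rabs_R0. lra.
  - destruct (Nat.leb_spec r N).
    + rewrite (ev_ext _ Hv (restr 1 N a) a) by (intros d Hd; simpl in Hd; restr_cases).
      specialize (ev_a_le _ Hv). lra.
    + simpl in Hv |- *. destruct Hv as [Heta [_ [Hj _]]].
      replace (restr 1 N a (G0 r j e eta)) with 0 by restr_cases.
      replace (restr 1 (r - 1) (restr 1 N a)) with (restr 1 N a)
        by (extensionality d; restr_cases).
      rewrite Rplus_0_l. eapply Rle_trans; [apply Rabs_weight_le, m_ge4; lia|].
      specialize (IH Heta N). lra.
  - destruct (Nat.leb_spec r N).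
    + rewrite (ev_ext _ Hv (restr 1 N a) a) by (intros d Hd; simpl in Hd; restr_cases).
      specialize (ev_a_le _ Hv). lra.
    + simpl in Hv |- *. destruct Hv as [Hx [Heta [_ [_ [Hj _]]]]].
      replace (restr 1 N a (GS r xi j e eta)) with 0 by restr_cases.
      rewrite Rplus_0_l.
      destruct (Nat.leb_spec (rank xi) N).
      * rewrite (ev_ext _ Hx (restr 1 N a) a) by (intros d Hd; restr_cases).
        replace (restr (S (rank xi)) (r - 1) (restr 1 N a))
          with (fun d => restr 1 N a d - restr 1 (rank xi) a d)
          by (extensionality d; restr_cases).
        rewrite ev_sub.
        eapply Rle_trans; [apply Rabs_triang|].
        eapply Rle_trans;
          [apply Rplus_le_compat; [apply ev_a_le, Hx | apply Rabs_weight_le, m_ge4; lia]|].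
        pose proof (IHeta Heta N). pose proof (IHeta Heta (rank xi)).
        pose proof (Rabs_sub_le (ev m eta (restr 1 N a)) (ev m eta (restr 1 (rank xi) a))).
        lra.
      * replace (restr (S (rank xi)) (r - 1) (restr 1 N a)) with (fun _ : gam => 0)
          by (extensionality d; restr_cases).
        rewrite ev_0, Rmult_0_r, Rplus_0_r. apply IHxi; assumption.
Qed.

Lemma ev_restr_le g lo hi : valid n g -> (1 <= lo)%nat -> Rabs (ev m g (restr lo hi a)) <= 4 * C.
Proof.
  intros Hg Hlo. destruct (Nat.leb_spec lo hi).
  - replace (restr lo hi a) with (fun d => restr 1 hi a d - restr 1 (lo - 1) a d)
      by (extensionality d; restr_cases).
    rewrite ev_sub. eapply Rle_trans; [apply Rabs_sub_le|].
    pose proof (ev_restr_upto_le g Hg hi). pose proof (ev_restr_upto_le g Hg (lo - 1)). lra.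
  - replace (restr lo hi a) with (fun _ : gam => 0) by (extensionality d; restr_cases).
    rewrite ev_0, Rabs_R0. pose proof bound_nonneg. lra.
Qed.

End Evaluation.

Definition sub_itv (J I : itv) : Prop := (fst I <= fst J)%nat /\ (snd J <= snd I)%nat.

Lemma app_single_eq_single (t : list nat) x y : t ++ [x] = [y] -> t = nil /\ x = y.
Proof.
  destruct t as [|z [|w t]]; simpl; intros H; inversion H; auto.
Qed.

Lemma branch_neq_nil (Tn : list nat -> Prop) u r v l :
  branch Tn u r v -> (1 <= l <= r)%nat -> u l <> nil.
Proof.
  intros [_ [_ Hbr]] Hl. destruct l as [|l]; [lia|].
  destruct (Hbr l ltac:(lia)) as [_ [k ->]]. destruct (u l); discriminate.
Qed.

Section Tree_analysis.

Variables (m n : nat -> nat) (g : gam).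
Hypothesis m_ge4 : forall j, (1 <= j)%nat -> 4 <= INR (m j).
Hypothesis g_valid : valid n g.

Lemma tnode_valid t I e eta : tnode m n g t (I, e, eta) -> valid n eta /\ (1 <= fst I)%nat.
Proof.
  intros H. remember (I, e, eta) as lbl eqn:E. revert I e eta E.
  induction H; intros I' e' eta' E; injection E as <- <- <-.
  - auto.
  - destruct (eanal_spec n g g_valid Ik ek etak) as [Hk [HIk _]]; [eapply nth_error_In; eauto|].
    auto.
  - destruct (IHtnode I e eta eq_refl) as [Heta HI].
    destruct (eanal_spec n eta Heta Ik ek etak) as [Hk [HIk _]]; [eapply nth_error_In; eauto|].
    split; [exact Hk | simpl; lia].
Qed.

Lemma tnode_nil lbl : tnode m n g nil lbl -> lbl = ((1%nat, (rank g - 1)%nat), true, g).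
Proof.
  intros H. remember (@nil nat) as s. destruct H; [reflexivity | discriminate |].
  destruct t; discriminate.
Qed.

Lemma tnode_unique t l1 l2 : tnode m n g t l1 -> tnode m n g t l2 -> l1 = l2.
Proof.
  intros H1. revert l2. induction H1; intros l2 K.
  - symmetry. apply tnode_nil, K.
  - remember [S k] as s. destruct K.
    + discriminate.
    + injection Heqs as <-. congruence.
    + apply app_single_eq_single in Heqs. tauto.
  - remember (t ++ [S k]) as s. destruct K.
    + destruct t; discriminate.
    + symmetry in Heqs. apply app_single_eq_single in Heqs. tauto.
    + apply app_inj_tail in Heqs as [<- E]. injection E as <-.
      specialize (IHtnode _ K). injection IHtnode as <- <- <-. congruence.
Qed.

Lemma tnode_child_inv t I e eta x J e' eta' :
  tnode m n g t (I, e, eta) -> tnode m n g (t ++ [x]) (J, e', eta') ->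
  exists k Ik, nth_error (eanal eta) k = Some (Ik, e', eta') /\ sub_itv J Ik /\
    (t <> nil -> sub_itv J I).
Proof.
  intros H1 H2. remember (t ++ [x]) as s. remember (J, e', eta') as lbl. destruct H2.
  - destruct t; discriminate.
  - symmetry in Heqs. apply app_single_eq_single in Heqs as [-> ->].
    apply tnode_nil in H1. injection H1 as -> -> ->. injection Heqlbl as -> -> ->.
    exists k, J. unfold sub_itv. repeat split; lia || tauto.
  - apply app_inj_tail in Heqs as [-> <-].
    pose proof (tnode_unique _ _ _ H2 H1) as U. injection U as -> -> ->.
    injection Heqlbl as <- <- <-.
    exists k, Ik. unfold sub_itv, inter. simpl. repeat split; [exact H0 | lia ..].
Qed.

Lemma tnode_child_ev_le t I e eta x J e' eta' (b : gam -> R) :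
  tnode m n g t (I, e, eta) -> tnode m n g (t ++ [x]) (J, e', eta') ->
  (forall d, b d <> 0 -> in_itv J (rank d)) ->
  Rabs (ev m eta b) <= / 4 * Rabs (ev m eta' b).
Proof.
  intros Ht Hx Hb.
  destruct (tnode_child_inv _ _ _ _ _ _ _ _ Ht Hx) as [k [Ik [Hk [HJ _]]]].
  destruct (tnode_valid _ _ _ _ Ht) as [Heta _].
  destruct (eanal_spec n eta Heta Ik e' eta') as [_ [_ [_ Hwj]]]; [eapply nth_error_In; eauto|].
  rewrite (ev_eanal_step m n eta k Ik e' eta' b Heta Hk).
  - apply Rabs_weight_le, m_ge4, Hwj.
  - intros d Hd. specialize (Hb d Hd). unfold in_itv, sub_itv in *. lia.
Qed.

Lemma branch_sub_itv u r v Iv e_v etav :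
  branch (tree_of m n g) u r v -> tnode m n g v (Iv, e_v, etav) ->
  forall l, (1 <= l <= r)%nat -> forall J e eta, tnode m n g (u l) (J, e, eta) -> sub_itv Iv J.
Proof.
  intros Hbr Hv l [Hl1 Hlr]. revert l Hlr Hl1. refine (nat_down_ind _ r _ _).
  - intros _ J e eta HJ. destruct Hbr as [_ [Hur _]]. rewrite Hur in HJ.
    pose proof (tnode_unique _ _ _ HJ Hv) as U. injection U as -> _ _. unfold sub_itv. lia.
  - intros l' Hl' IH Hl1 J e eta HJ. pose proof Hbr as (_ & _ & Hstep).
    destruct (Hstep l' Hl') as [[[[J' e'] eta'] HJ'] [k Hk]].
    specialize (IH ltac:(lia) J' e' eta' HJ'). rewrite Hk in HJ'.
    destruct (tnode_child_inv _ _ _ _ _ _ _ _ HJ HJ') as [_ [_ [_ [_ Hsub]]]].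
    specialize (Hsub (branch_neq_nil _ _ _ _ l' Hbr ltac:(lia))).
    unfold sub_itv in *. lia.
Qed.

Lemma branch_ev_decay u r v Iv e_v etav (b : gam -> R) :
  branch (tree_of m n g) u r v -> tnode m n g v (Iv, e_v, etav) ->
  (forall d, b d <> 0 -> in_itv Iv (rank d)) ->
  forall l, (l <= r)%nat -> forall I e eta, tnode m n g (u l) (I, e, eta) ->
  Rabs (ev m eta b) <= (/ 4) ^ (r - l) * Rabs (ev m etav b).
Proof.
  intros Hbr Hv Hb. refine (nat_down_ind _ r _ _).
  - intros I e eta HI. destruct Hbr as [_ [Hur _]]. rewrite Hur in HI.
    pose proof (tnode_unique _ _ _ HI Hv) as U. injection U as _ _ ->.
    rewrite Nat.sub_diag. simpl. lra.
  - intros l Hl IH I e eta HI. pose proof Hbr as (_ & _ & Hstep).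
    destruct (Hstep l Hl) as [[[[J e'] eta'] HJ] [k Hk]].
    pose proof (branch_sub_itv _ _ _ _ _ _ Hbr Hv (S l) ltac:(lia) _ _ _ HJ) as HvJ.
    specialize (IH _ _ _ HJ). rewrite Hk in HJ.
    eapply Rle_trans.
    { apply (tnode_child_ev_le _ _ _ _ _ _ _ _ b HI HJ).
      intros d Hd. specialize (Hb d Hd). unfold in_itv, sub_itv in *. lia. }
    replace (r - l)%nat with (S (r - S l)) by lia. simpl. rewrite Rmult_assoc.
    apply Rmult_le_compat_l; lra.
Qed.

Lemma ev_restr_covered a eta I : fin_supp n a ->
  (forall k, rng_vec n a k -> rng_estar m n g k -> rng_fun m n eta I k) ->
  ev m g a = ev m g (restr (fst I) (snd I) a).
Proof.
  intros [Hvalid [L HL]] Hcov.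
  assert (Hin : forall d, a d <> 0 -> dcoef m g d <> 0 -> in_itv I (rank d)).
  { intros d Ha Hdc.
    destruct (Hcov (rank d)) as [k1 [k2 [[d1 [_ [I1 [_ R1]]]] [[d2 [_ [I2 [_ R2]]]] Hk]]]];
      try (apply hull_self; exists d; auto).
    unfold in_itv in *. lia. }
  set (b := restr (fst I) (snd I) a).
  assert (Hsplit : a = fun x => b x + (a x - b x)) by (extensionality x; ring).
  rewrite Hsplit at 1.
  rewrite ev_add, (ev_eq0_of_dcoef_eq0 m g L (fun x => a x - b x)); [ring | |].
  - intros d H. apply HL. intros E. apply H. unfold b, restr. rewrite E. destruct (andb _ _); ring.
  - intros d H. destruct (Req_dec (dcoef m g d) 0) as [E|E]; [exact E|]. exfalso. apply H.
    destruct (Req_dec (a d) 0) as [Ea|Ea].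
    + unfold b, restr. rewrite Ea. destruct (andb _ _); ring.
    + specialize (Hin d Ea E). unfold b, in_itv in *. restr_cases.
Qed.

Lemma covering_index_branch_le i a v u r : fin_supp n a -> normalised m n a ->
  branch (tree_of m n g) u r v -> covering_index m n g a v ->
  / 4 ^ (i + 1) < Rabs (ev m g a) -> (r <= i + 1)%nat.
Proof.
  intros Hfs [Hnorm _] Hbr [[Iv [e [etav [Hv Hcov]]]] _] Hgt.
  rewrite (ev_restr_covered a etav Iv Hfs Hcov) in Hgt.
  set (b := restr (fst Iv) (snd Iv) a) in Hgt.
  assert (Hroot : tnode m n g (u 0%nat) ((1%nat, (rank g - 1)%nat), true, g))
    by (destruct Hbr as [-> _]; apply tn_root).
  pose proof (branch_ev_decay _ _ _ _ _ _ b Hbr Hv (fun d => restr_supp _ _ a d) 0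
                (Nat.le_0_l r) _ _ _ Hroot) as Hdecay.
  destruct (tnode_valid _ _ _ _ Hv) as [Hetav HIv].
  pose proof (ev_restr_le m n a 1 m_ge4 Hnorm etav (fst Iv) (snd Iv) Hetav HIv) as Hproj.
  fold b in Hproj. rewrite Nat.sub_0_r in Hdecay.
  assert (H : / 4 ^ (i + 1) < (/ 4) ^ r * 4 ^ 1).
  { assert (0 <= (/ 4) ^ r) by (apply pow_le; lra). simpl. nra. }
  apply pow_inv4_lt in H. lia.
Qed.

End Tree_analysis.

Lemma block_seq_tail h fs : block_seq (h :: fs) -> block_seq fs.
Proof. intros H i1 i2 Hi. apply (H (S i1) (S i2)). simpl. lia. Qed.

Lemma block_seq_head h fs f : block_seq (h :: fs) -> In f fs -> blocks h f.
Proof.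
  intros H Hin. destruct (In_nth fs f (fun _ => 0) Hin) as [q [Hq <-]].
  apply (H 0%nat (S q)). simpl. lia.
Qed.

Lemma sumf_eq0 fs x : (forall f, In f fs -> f x = 0) -> sumf fs x = 0.
Proof.
  induction fs as [|h fs IH]; intros H; [reflexivity|].
  change (h x + sumf fs x = 0).
  rewrite (H h (in_eq h fs)), IH by (intros; apply H, in_cons; assumption). ring.
Qed.

Lemma sumf_block_seq fs f x : block_seq fs -> In f fs -> f x <> 0 -> sumf fs x = f x.
Proof.
  revert f. induction fs as [|h fs IH]; intros f Hb Hin Hf; [destruct Hin|].
  change (h x + sumf fs x = f x). destruct Hin as [<- | Hin].
  - rewrite sumf_eq0; [ring|]. intros f' Hf'.
    destruct (Req_dec (f' x) 0) as [E|E]; [exact E|].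
    pose proof (block_seq_head _ _ _ Hb Hf' x x Hf E). lia.
  - rewrite (IH f (block_seq_tail _ _ Hb) Hin Hf).
    destruct (Req_dec (h x) 0) as [E|E]; [rewrite E; ring|].
    pose proof (block_seq_head _ _ _ Hb Hin x x E Hf). lia.
Qed.

Section W_tree_analysis.

Variables (m n : nat -> nat) (f : nat -> R) (Tn : list nat -> Prop) (ft : list nat -> nat -> R).
Hypothesis m_ge4 : forall j, (1 <= j)%nat -> 4 <= INR (m j).
Hypothesis ft_analysis : W_tree_analysis m n f Tn ft.

Lemma W_tree_child_eq t k x : Tn (t ++ [k]) -> ft (t ++ [k]) x <> 0 ->
  exists j, (1 <= j)%nat /\ ft t x = / INR (m j) * ft (t ++ [k]) x.
Proof.
  destruct ft_analysis as [[_ [Tclosed _]] [_ [_ Hnode]]]. intros Htk Hx.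
  destruct (Hnode t (Tclosed _ _ Htk) (ex_intro _ k Htk))
    as [j [S [Hj [_ [HS [_ [_ [Hblock Heq]]]]]]]].
  assert (Hin : In (ft (t ++ [k])) (map ft S)) by (apply in_map, HS; eauto).
  exists j. split; [exact Hj|]. rewrite Heq, (sumf_block_seq _ _ _ Hblock Hin Hx). reflexivity.
Qed.

Lemma branch_W_decay u r v x : branch Tn u r v -> ft v x <> 0 ->
  forall l, (l <= r)%nat -> ft (u l) x <> 0 /\ Rabs (ft (u l) x) <= (/ 4) ^ (r - l) * Rabs (ft v x).
Proof.
  intros Hbr Hv. refine (nat_down_ind _ r _ _).
  - destruct Hbr as [_ [-> _]]. rewrite Nat.sub_diag. simpl. split; [exact Hv | lra].
  - intros l Hl [Hnz Hle]. destruct Hbr as [_ [_ Hstep]].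
    destruct (Hstep l Hl) as [Htk [k Hk]]. rewrite Hk in Htk, Hnz, Hle.
    destruct (W_tree_child_eq _ _ _ Htk Hnz) as [j [Hj ->]].
    pose proof (m_ge4 j Hj) as Hmj. split.
    + apply Rmult_integral_contrapositive_currified; [apply Rinv_neq_0_compat; lra | exact Hnz].
    + replace (/ INR (m j) * ft (u l ++ [k]) x) with (/ INR (m j) * sgn true * ft (u l ++ [k]) x)
        by (simpl; ring).
      eapply Rle_trans; [apply Rabs_weight_le, Hmj|].
      replace (r - l)%nat with (S (r - S l)) by lia. simpl. rewrite Rmult_assoc.
      apply Rmult_le_compat_l; lra.
Qed.

Lemma W_branch_le i u r v l : branch Tn u r v -> (forall x, ft v x = estar l x) ->
  / 4 ^ (i + 1) < f l -> (r <= i)%nat.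
Proof.
  intros Hbr Hv Hf.
  assert (Hvl : ft v l = 1) by (rewrite Hv; unfold estar; rewrite Nat.eqb_refl; reflexivity).
  destruct (branch_W_decay u r v l Hbr ltac:(lra) 0 (Nat.le_0_l r)) as [_ Hle].
  destruct ft_analysis as [_ [Hroot _]]. destruct Hbr as [Hu0 _].
  rewrite Hu0, Hroot, Nat.sub_0_r, Hvl, Rabs_R1, Rmult_1_r in Hle.
  assert (H : / 4 ^ (i + 1) < (/ 4) ^ r * 4 ^ 0) by (pose proof (Rle_abs (f l)); simpl; lra).
  apply pow_inv4_lt in H. lia.
Qed.

End W_tree_analysis.

Theorem lemma3p2 (m n : nat -> nat) (i : nat) :
  good_seqs m n -> (1 <= i)%nat ->
  (* (1) *)
  (forall (g : gam) (a : gam -> R) (v : list nat) (u : nat -> list nat) (r : nat),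
     valid n g ->
     tree_of m n g v -> v <> nil -> branch (tree_of m n g) u r v ->
     fin_supp n a -> normalised m n a ->
     covering_index m n g a v ->
     (forall xi, valid n xi -> Rabs (a xi) < / 4 ^ (i + 3)) ->
     / 4 ^ (i + 1) < Rabs (ev m g a) ->
     (r <= i + 1)%nat) /\
  (* (2) *)
  (forall (f : nat -> R) (Tn : list nat -> Prop) (ft : list nat -> nat -> R)
          (v : list nat) (u : nat -> list nat) (r l : nat),
     inW m n f -> W_tree_analysis m n f Tn ft ->
     Tn v -> v <> nil -> branch Tn u r v ->
     (forall x, ft v x = estar l x) ->
     / 4 ^ (i + 1) < f l ->
     (r <= i)%nat).
Proof.
  intros Hgood _. pose proof (good_seqs_m_ge4 m n Hgood) as Hm. split.
  - intros g a v u r Hg _ _ Hbr Hfs Hnorm Hcov _ Hgt.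
    exact (covering_index_branch_le m n g Hm Hg i a v u r Hfs Hnorm Hbr Hcov Hgt).
  - intros f Tn ft v u r l _ Hft _ _ Hbr Hv Hf.
    exact (W_branch_le m n f Tn ft Hm Hft i u r v l Hbr Hv Hf).
Qed.
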